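(* Every morphism of bigroupoids $(F,\phi):\mathcal A\to\mathcal C$ factors as $(F,\phi)=(H,\eta)\circ(G,\psi)$ with $(G,\psi):\mathcal A\to\mathcal B$ a trivial cofibration and $(H,\eta):\mathcal B\to\mathcal C$ a fibration.
   Context: A bigroupoid $\mathcal B$ consists of: a set $\mathcal B_0$ of 0-cells; for each $A,B\in\mathcal B_0$ a groupoid $\mathcal B(A,B)$ whose objects are 1-cells and whose arrows are 2-cells; composition functors $*$; identity 1-cells $1_A$; inversion functors $(-)^*$; and natural isomorphisms $\mathbf a:(h*g)*f\Rightarrow h*(g*f)$, $\mathbf l:1_B*f\Rightarrow f$, $\mathbf r:f*1_A\Rightarrow f$, $\mathbf e:f^**f\Rightarrow 1_A$, $\mathbf i:1_B\Rightarrow f*f^*$, such that the pentagon for $\mathbf a$ commutes, $(\mathrm{id}*\mathbf l)\circ\mathbf a=\mathbf r*\mathrm{id}$, and $\mathbf r_f\circ(\mathrm{id}*\mathbf e_f)\circ\mathbf a\circ(\mathbf i_f*\mathrm{id})=\mathbf l_f$. A morphism $(F,\phi):\mathcal A\to\mathcal B$ consists of a function on 0-cells, functors $F_{A,A'}:\mathcal A(A,A')\to\mathcal B(FA,FA')$ and natural isomorphisms $\phi_{g,f}:Fg*Ff\Rightarrow F(g*f)$, $\phi_A:1_{FA}\Rightarrow F1_A$, $\phi_f:(Ff)^*\Rightarrow F(f^* )$ satisfying $F\mathbf a\circ\phi\circ(\phi*\mathrm{id})=\phi\circ(\mathrm{id}*\phi)\circ\mathbf a$, $F\mathbf r\circ\phi\circ(\mathrm{id}*\phi_A)=\mathbf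 r$, $F\mathbf l\circ\phi\circ(\phi_B*\mathrm{id})=\mathbf l$, $F\mathbf e\circ\phi\circ(\phi_f*\mathrm{id})=\phi_A\circ\mathbf e$, $F\mathbf i\circ\phi_B=\phi\circ(\mathrm{id}*\phi_f)\circ\mathbf i$; composition is $(G,\gamma)\circ(F,\phi)=(GF,G\phi\circ\gamma F)$. Fibration: (1) for every 0-cell $A'$ of $\mathcal A$ and 1-cell $b:B\to FA'$ there is $a:A\to A'$ with $FA=B$, $Fa=b$; (2) for every 1-cell $a'$ and 2-cell $\beta:b\Rightarrow Fa'$ there is $\alpha:a\Rightarrow a'$ with $Fa=b$, $F\alpha=\beta$. Cofibration: injective on 0-cells and each $F_{A,A'}$ injective on objects. Weak equivalence: every 0-cell $B$ of the codomain admits a 1-cell $B\to FA'$ for some 0-cell $A'$, and each $F_{A,A'}$ is an equivalence of categories. A trivial cofibration is a cofibration that is a weak equivalence. *)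

Record BGData := {
  ob : Type;
  hom : ob -> ob -> Type;
  cell : forall A B, hom A B -> hom A B -> Type;
  (* vertical composition  vcomp y x = y o x  (first x, then y) *)
  vcomp : forall A B (f g h : hom A B), cell A B g h -> cell A B f g -> cell A B f h;
  id2 : forall A B (f : hom A B), cell A B f f;
  vinv : forall A B (f g : hom A B), cell A B f g -> cell A B g f;
  (* horizontal composition  hcomp g f = g * f  (first f, then g) *)
  hcomp : forall A B C, hom B C -> hom A B -> hom A C;
  hcomp2 : forall A B C (g g' : hom B C) (f f' : hom A B),
      cell B C g g' -> cell A B f f' -> cell A C (hcomp A B C g f) (hcomp A B C g' f');
  id1 : forall A, hom A A;
  inv1 : forall A B, hom A B -> hom B A;
  inv2 : forall A B (f g : hom A B), cell A B f g -> cell B A (inv1 A B f) (inv1 A B g);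
  assoc : forall A B C D (h : hom C D) (g : hom B C) (f : hom A B),
      cell A D (hcomp A B D (hcomp B C D h g) f) (hcomp A C D h (hcomp A B C g f));
  lunit : forall A B (f : hom A B), cell A B (hcomp A B B (id1 B) f) f;
  runit : forall A B (f : hom A B), cell A B (hcomp A A B f (id1 A)) f;
  ecell : forall A B (f : hom A B), cell A A (hcomp A B A (inv1 A B f) f) (id1 A);
  icell : forall A B (f : hom A B), cell B B (id1 B) (hcomp B A B f (inv1 A B f))
}.

Arguments hom {b}.
Arguments cell {b A B}.
Arguments vcomp {b A B f g h}.
Arguments id2 {b A B}.
Arguments vinv {b A B f g}.
Arguments hcomp {b A B C}.
Arguments hcomp2 {b A B C g g' f f'}.
Arguments id1 {b}.
Arguments inv1 {b A B}.
Arguments inv2 {b A B f g}.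
Arguments assoc {b A B C D}.
Arguments lunit {b A B}.
Arguments runit {b A B}.
Arguments ecell {b A B}.
Arguments icell {b A B}.

Declare Scope bg_scope.
Open Scope bg_scope.
Notation "y ∘ x" := (vcomp y x) (at level 40, left associativity) : bg_scope.
Notation "y ⋆ x" := (hcomp2 y x) (at level 35, no associativity) : bg_scope.
Notation "g ⊙ f" := (hcomp g f) (at level 35, no associativity) : bg_scope.

Record IsBigroupoid (BG : BGData) : Prop := {
  vcomp_assoc : forall (A B : ob BG) (f g h k : hom A B) (x : cell h k) (y : cell g h) (z : cell f g),
      x ∘ (y ∘ z) = (x ∘ y) ∘ z;
  vcomp_id_l : forall (A B : ob BG) (f g : hom A B) (x : cell f g), id2 g ∘ x = x;
  vcomp_id_r : forall (A B : ob BG) (f g : hom A B) (x : cell f g), x ∘ id2 f = x;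
  vinv_l : forall (A B : ob BG) (f g : hom A B) (x : cell f g), vinv x ∘ x = id2 f;
  vinv_r : forall (A B : ob BG) (f g : hom A B) (x : cell f g), x ∘ vinv x = id2 g;
  hcomp2_id : forall (A B C : ob BG) (g : hom B C) (f : hom A B), id2 g ⋆ id2 f = id2 (g ⊙ f);
  hcomp2_vcomp : forall (A B C : ob BG) (g g' g'' : hom B C) (f f' f'' : hom A B)
      (b' : cell g' g'') (b : cell g g') (a' : cell f' f'') (a : cell f f'),
      (b' ∘ b) ⋆ (a' ∘ a) = (b' ⋆ a') ∘ (b ⋆ a);
  inv2_id : forall (A B : ob BG) (f : hom A B), inv2 (id2 f) = id2 (inv1 f);
  inv2_vcomp : forall (A B : ob BG) (f g h : hom A B) (y : cell g h) (x : cell f g),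
      inv2 (y ∘ x) = inv2 y ∘ inv2 x;
  assoc_nat : forall (A B C D : ob BG) (h h' : hom C D) (g g' : hom B C) (f f' : hom A B)
      (c : cell h h') (b : cell g g') (a : cell f f'),
      assoc h' g' f' ∘ ((c ⋆ b) ⋆ a) = (c ⋆ (b ⋆ a)) ∘ assoc h g f;
  lunit_nat : forall (A B : ob BG) (f f' : hom A B) (a : cell f f'),
      lunit f' ∘ (id2 (id1 B) ⋆ a) = a ∘ lunit f;
  runit_nat : forall (A B : ob BG) (f f' : hom A B) (a : cell f f'),
      runit f' ∘ (a ⋆ id2 (id1 A)) = a ∘ runit f;
  ecell_nat : forall (A B : ob BG) (f f' : hom A B) (a : cell f f'),
      ecell f' ∘ (inv2 a ⋆ a) = id2 (id1 A) ∘ ecell f;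
  icell_nat : forall (A B : ob BG) (f f' : hom A B) (a : cell f f'),
      (a ⋆ inv2 a) ∘ icell f = icell f' ∘ id2 (id1 B);
  pentagon : forall (A B C D E : ob BG) (k : hom D E) (h : hom C D) (g : hom B C) (f : hom A B),
      (id2 k ⋆ assoc h g f) ∘ assoc k (h ⊙ g) f ∘ (assoc k h g ⋆ id2 f)
      = assoc k h (g ⊙ f) ∘ assoc (k ⊙ h) g f;
  triangle : forall (A B C : ob BG) (g : hom B C) (f : hom A B),
      (id2 g ⋆ lunit f) ∘ assoc g (id1 B) f = runit g ⋆ id2 f;
  inverse_coh : forall (A B : ob BG) (f : hom A B),
      runit f ∘ (id2 f ⋆ ecell f) ∘ assoc f (inv1 f) f ∘ (icell f ⋆ id2 f) = lunit f
}.

Record Bigroupoid := {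
  bg_data :> BGData;
  bg_ax : IsBigroupoid bg_data
}.

Record MorData (A C : BGData) := {
  m0 : ob A -> ob C;
  m1 : forall X Y : ob A, hom X Y -> hom (m0 X) (m0 Y);
  m2 : forall (X Y : ob A) (f g : hom X Y), cell f g -> cell (m1 X Y f) (m1 X Y g);
  phi_c : forall (X Y Z : ob A) (g : hom Y Z) (f : hom X Y),
      cell (m1 Y Z g ⊙ m1 X Y f) (m1 X Z (g ⊙ f));
  phi_u : forall X : ob A, cell (id1 (m0 X)) (m1 X X (id1 X));
  phi_i : forall (X Y : ob A) (f : hom X Y), cell (inv1 (m1 X Y f)) (m1 Y X (inv1 f))
}.

Arguments m0 {A C}.
Arguments m1 {A C} m {X Y}.
Arguments m2 {A C} m {X Y f g}.
Arguments phi_c {A C} m {X Y Z}.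
Arguments phi_u {A C} m.
Arguments phi_i {A C} m {X Y}.

Record IsMorphism (A C : BGData) (F : MorData A C) : Prop := {
  m2_id : forall X Y (f : hom X Y), m2 F (id2 f) = id2 (m1 F f);
  m2_vcomp : forall X Y (f g h : hom X Y) (y : cell g h) (x : cell f g),
      m2 F (y ∘ x) = m2 F y ∘ m2 F x;
  phi_c_nat : forall X Y Z (g g' : hom Y Z) (f f' : hom X Y) (b : cell g g') (a : cell f f'),
      phi_c F g' f' ∘ (m2 F b ⋆ m2 F a) = m2 F (b ⋆ a) ∘ phi_c F g f;
  phi_i_nat : forall X Y (f f' : hom X Y) (a : cell f f'),
      phi_i F f' ∘ inv2 (m2 F a) = m2 F (inv2 a) ∘ phi_i F f;
  mor_assoc : forall X Y Z W (h : hom Z W) (g : hom Y Z) (f : hom X Y),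
      m2 F (assoc h g f) ∘ phi_c F (h ⊙ g) f ∘ (phi_c F h g ⋆ id2 (m1 F f))
      = phi_c F h (g ⊙ f) ∘ (id2 (m1 F h) ⋆ phi_c F g f) ∘ assoc (m1 F h) (m1 F g) (m1 F f);
  mor_runit : forall X Y (f : hom X Y),
      m2 F (runit f) ∘ phi_c F f (id1 X) ∘ (id2 (m1 F f) ⋆ phi_u F X) = runit (m1 F f);
  mor_lunit : forall X Y (f : hom X Y),
      m2 F (lunit f) ∘ phi_c F (id1 Y) f ∘ (phi_u F Y ⋆ id2 (m1 F f)) = lunit (m1 F f);
  mor_ecell : forall X Y (f : hom X Y),
      m2 F (ecell f) ∘ phi_c F (inv1 f) f ∘ (phi_i F f ⋆ id2 (m1 F f))
      = phi_u F X ∘ ecell (m1 F f);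
  mor_icell : forall X Y (f : hom X Y),
      m2 F (icell f) ∘ phi_u F Y
      = phi_c F f (inv1 f) ∘ (id2 (m1 F f) ⋆ phi_i F f) ∘ icell (m1 F f)
}.

Arguments IsMorphism {A C}.

Definition mcomp {A B C : BGData} (H : MorData B C) (G : MorData A B) : MorData A C :=
  {| m0 := fun X => m0 H (m0 G X);
     m1 := fun X Y f => m1 H (m1 G f);
     m2 := fun X Y f g a => m2 H (m2 G a);
     phi_c := fun X Y Z g f => m2 H (phi_c G g f) ∘ phi_c H (m1 G g) (m1 G f);
     phi_u := fun X => m2 H (phi_u G X) ∘ phi_u H (m0 G X);
     phi_i := fun X Y f => m2 H (phi_i G f) ∘ phi_i H (m1 G f) |}.

Definition fibration {A C : BGData} (F : MorData A C) : Prop :=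
  (forall (A' : ob A) (B : ob C) (b : hom B (m0 F A')),
     exists (A0 : ob A) (a : hom A0 A'),
       existT (fun X => hom X (m0 F A')) (m0 F A0) (m1 F a)
       = existT (fun X => hom X (m0 F A')) B b) /\
  (forall (X Y : ob A) (a' : hom X Y) (b : hom (m0 F X) (m0 F Y)) (beta : cell b (m1 F a')),
     exists (a : hom X Y) (alpha : cell a a'),
       existT (fun x => cell x (m1 F a')) (m1 F a) (m2 F alpha)
       = existT (fun x => cell x (m1 F a')) b beta).

Definition cofibration {A C : BGData} (F : MorData A C) : Prop :=
  (forall X Y : ob A, m0 F X = m0 F Y -> X = Y) /\
  (forall (X Y : ob A) (f g : hom X Y), m1 F f = m1 F g -> f = g).

(** F_{X,Y} : A(X,Y) -> C(FX,FY) is an equivalence of categories: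
    it has a quasi-inverse functor with natural isomorphisms
    (naturality squares; all 2-cells are invertible in a groupoid). *)
Definition hom_equivalence {A C : BGData} (F : MorData A C) (X Y : ob A) : Prop :=
  exists (G1 : hom (m0 F X) (m0 F Y) -> hom X Y)
         (G2 : forall x y : hom (m0 F X) (m0 F Y), cell x y -> cell (G1 x) (G1 y))
         (eta : forall f : hom X Y, cell (G1 (m1 F f)) f)
         (eps : forall x : hom (m0 F X) (m0 F Y), cell (m1 F (G1 x)) x),
    (forall x, G2 x x (id2 x) = id2 (G1 x)) /\
    (forall x y z (b : cell y z) (a : cell x y), G2 x z (b ∘ a) = G2 y z b ∘ G2 x y a) /\
    (forall f g (a : cell f g), eta g ∘ G2 _ _ (m2 F a) = a ∘ eta f) /\
    (forall x y (b : cell x y), eps y ∘ m2 F (G2 x y b) = b ∘ eps x).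

Definition weak_equivalence {A C : BGData} (F : MorData A C) : Prop :=
  (forall B : ob C, exists A' : ob A, inhabited (hom B (m0 F A'))) /\
  (forall X Y : ob A, hom_equivalence F X Y).

Definition trivial_cofibration {A C : BGData} (F : MorData A C) : Prop :=
  cofibration F /\ weak_equivalence F.

(* The bigroupoid B has as objects triples (Z, X, c) with Z in C, X in A and
   c : Z -> F X in C; a 1-cell (Z, X, c) -> (Z', X', c') is a triple (f, h, s)
   with f : X -> X' in A, h : Z -> Z' in C and a 2-cell s : c' * h => F f * c
   ("a square"); a 2-cell (f, h, s) => (f', h', s') is just a 2-cell f => f'
   of A.  Every structure 2-cell of B is the one of A, so B inherits the
   bigroupoid axioms from A.  The inclusion G : A -> B, X |-> (F X, X, 1), is
   a strict morphism which is injective on 0- and 1-cells, bijective on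
   2-cells and essentially surjective: it is a trivial cofibration.  The
   projection H : B -> C, (Z, X, c) |-> Z, sends a 2-cell α of B to the unique
   β with  s' o (c' * β) = (F α * c) o s, which exists because whiskering by
   a 1-cell is a bijection on 2-cells in any bigroupoid.  Path lifting makes
   H a fibration, and H o G = F on the nose. *)

From Stdlib Require Import FunctionalExtensionality.

Existing Class IsBigroupoid.
#[local] Existing Instance bg_ax.

Section HomGroupoids.
Context {BG : BGData} {HB : IsBigroupoid BG}.

Lemma vcompA {X Y : ob BG} {f g h k : hom X Y} (x : cell h k) (y : cell g h) (z : cell f g) :
  x ∘ (y ∘ z) = x ∘ y ∘ z.
Proof. exact (vcomp_assoc _ HB _ _ _ _ _ _ x y z). Qed.
Lemma vcomp1l {X Y : ob BG} {f g : hom X Y} (x : cell f g) : id2 g ∘ x = x.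
Proof. exact (vcomp_id_l _ HB _ _ _ _ x). Qed.
Lemma vcomp1r {X Y : ob BG} {f g : hom X Y} (x : cell f g) : x ∘ id2 f = x.
Proof. exact (vcomp_id_r _ HB _ _ _ _ x). Qed.
Lemma vcompVl {X Y : ob BG} {f g : hom X Y} (x : cell f g) : vinv x ∘ x = id2 f.
Proof. exact (vinv_l _ HB _ _ _ _ x). Qed.
Lemma vcompVr {X Y : ob BG} {f g : hom X Y} (x : cell f g) : x ∘ vinv x = id2 g.
Proof. exact (vinv_r _ HB _ _ _ _ x). Qed.

Lemma chain2 {X Y : ob BG} {f g h k : hom X Y} {p : cell g h} {q : cell f g} {r : cell f h}
  (e : p ∘ q = r) (W : cell h k) : W ∘ p ∘ q = W ∘ r.
Proof. rewrite <- vcompA, e. reflexivity. Qed.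
Lemma chain3 {X Y : ob BG} {f g h k l : hom X Y} {p : cell h k} {q : cell g h} {s : cell f g}
  {r : cell f k} (e : p ∘ q ∘ s = r) (W : cell k l) : W ∘ p ∘ q ∘ s = W ∘ r.
Proof. rewrite <- e, !vcompA. reflexivity. Qed.
Lemma chain4 {X Y : ob BG} {f g h k l m : hom X Y} {p : cell k l} {q : cell h k} {s : cell g h}
  {t : cell f g} {r : cell f l} (e : p ∘ q ∘ s ∘ t = r) (W : cell l m) :
  W ∘ p ∘ q ∘ s ∘ t = W ∘ r.
Proof. rewrite <- e, !vcompA. reflexivity. Qed.
Lemma chain5 {X Y : ob BG} {f g h k l m n : hom X Y} {p : cell l m} {q : cell k l} {s : cell h k}
  {t : cell g h} {u : cell f g} {r : cell f m} (e : p ∘ q ∘ s ∘ t ∘ u = r) (W : cell m n) :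
  W ∘ p ∘ q ∘ s ∘ t ∘ u = W ∘ r.
Proof. rewrite <- e, !vcompA. reflexivity. Qed.

Lemma cancel_Vx {X Y : ob BG} {f g h : hom X Y} (W : cell f h) (x : cell f g) :
  W ∘ vinv x ∘ x = W.
Proof. rewrite <- vcompA, vcompVl, vcomp1r. reflexivity. Qed.
Lemma cancel_xV {X Y : ob BG} {f g h : hom X Y} (W : cell g h) (x : cell f g) :
  W ∘ x ∘ vinv x = W.
Proof. rewrite <- vcompA, vcompVr, vcomp1r. reflexivity. Qed.

End HomGroupoids.

Ltac reassoc := repeat rewrite vcompA.
Ltac rewrite_chain e :=
  first [ rewrite (chain5 e) | rewrite (chain4 e) | rewrite (chain3 e)
        | rewrite (chain2 e) | rewrite e ]; reassoc.
Ltac cancel_inverses :=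
  repeat first [ rewrite cancel_Vx | rewrite cancel_xV | rewrite vcompVl | rewrite vcompVr
               | rewrite vcomp1l | rewrite vcomp1r ].

Section BigroupoidCalculus.
Context {BG : BGData} {HB : IsBigroupoid BG}.

Lemma vinv_unique_l {X Y : ob BG} {f g : hom X Y} (x : cell f g) (y : cell g f) :
  y ∘ x = id2 f -> y = vinv x.
Proof. intros E. rewrite <- (vcomp1r y), <- (vcompVr x), vcompA, E, vcomp1l. reflexivity. Qed.
Lemma vinv_unique_r {X Y : ob BG} {f g : hom X Y} (x : cell f g) (y : cell g f) :
  x ∘ y = id2 g -> y = vinv x.
Proof. intros E. rewrite <- (vcomp1l y), <- (vcompVl x), <- vcompA, E, vcomp1r. reflexivity. Qed.
Lemma vinvK {X Y : ob BG} {f g : hom X Y} (x : cell f g) : vinv (vinv x) = x.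
Proof. symmetry. apply vinv_unique_l. apply vcompVr. Qed.
Lemma vinv_vcomp {X Y : ob BG} {f g h : hom X Y} (y : cell g h) (x : cell f g) :
  vinv (y ∘ x) = vinv x ∘ vinv y.
Proof. symmetry. apply vinv_unique_l. reassoc. cancel_inverses. reflexivity. Qed.
Lemma vinv_id2 {X Y : ob BG} (f : hom X Y) : vinv (id2 f) = id2 f.
Proof. symmetry. apply vinv_unique_l. apply vcomp1l. Qed.
Lemma cancel_l {X Y : ob BG} {f g h : hom X Y} (x : cell g h) (y z : cell f g) :
  x ∘ y = x ∘ z -> y = z.
Proof.
  intros E.
  rewrite <- (vcomp1l y), <- (vcomp1l z), <- (vcompVl x), <- !vcompA, E.
  reflexivity.
Qed.
Lemma cancel_r {X Y : ob BG} {f g h : hom X Y} (x : cell f g) (y z : cell g h) :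
  y ∘ x = z ∘ x -> y = z.
Proof.
  intros E.
  rewrite <- (vcomp1r y), <- (vcomp1r z), <- (vcompVr x), !vcompA, E.
  reflexivity.
Qed.

Lemma hcomp2_1 {X Y Z : ob BG} (g : hom Y Z) (f : hom X Y) : id2 g ⋆ id2 f = id2 (g ⊙ f).
Proof. exact (hcomp2_id _ HB _ _ _ g f). Qed.
Lemma interchange {X Y Z : ob BG} {g g' g'' : hom Y Z} {f f' f'' : hom X Y}
  (b' : cell g' g'') (b : cell g g') (a' : cell f' f'') (a : cell f f') :
  (b' ∘ b) ⋆ (a' ∘ a) = (b' ⋆ a') ∘ (b ⋆ a).
Proof. exact (hcomp2_vcomp _ HB _ _ _ _ _ _ _ _ _ b' b a' a). Qed.
Lemma assoc_natural {W X Y Z : ob BG} {h h' : hom Y Z} {g g' : hom X Y} {f f' : hom W X}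
  (c : cell h h') (b : cell g g') (a : cell f f') :
  assoc h' g' f' ∘ ((c ⋆ b) ⋆ a) = (c ⋆ (b ⋆ a)) ∘ assoc h g f.
Proof. exact (assoc_nat _ HB _ _ _ _ _ _ _ _ _ _ c b a). Qed.
Lemma lunit_natural {X Y : ob BG} {f f' : hom X Y} (a : cell f f') :
  lunit f' ∘ (id2 (id1 Y) ⋆ a) = a ∘ lunit f.
Proof. exact (lunit_nat _ HB _ _ _ _ a). Qed.
Lemma runit_natural {X Y : ob BG} {f f' : hom X Y} (a : cell f f') :
  runit f' ∘ (a ⋆ id2 (id1 X)) = a ∘ runit f.
Proof. exact (runit_nat _ HB _ _ _ _ a). Qed.
Lemma ecell_natural {X Y : ob BG} {f f' : hom X Y} (a : cell f f') :
  ecell f' ∘ (inv2 a ⋆ a) = id2 (id1 X) ∘ ecell f.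
Proof. exact (ecell_nat _ HB _ _ _ _ a). Qed.
Lemma pentagon_law {V W X Y Z : ob BG} (k : hom Y Z) (h : hom X Y) (g : hom W X) (f : hom V W) :
  (id2 k ⋆ assoc h g f) ∘ assoc k (h ⊙ g) f ∘ (assoc k h g ⋆ id2 f)
  = assoc k h (g ⊙ f) ∘ assoc (k ⊙ h) g f.
Proof. exact (pentagon _ HB _ _ _ _ _ k h g f). Qed.
Lemma triangle_law {X Y Z : ob BG} (g : hom Y Z) (f : hom X Y) :
  (id2 g ⋆ lunit f) ∘ assoc g (id1 Y) f = runit g ⋆ id2 f.
Proof. exact (triangle _ HB _ _ _ g f). Qed.
Lemma inverse_law {X Y : ob BG} (f : hom X Y) :
  runit f ∘ (id2 f ⋆ ecell f) ∘ assoc f (inv1 f) f ∘ (icell f ⋆ id2 f) = lunit f.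
Proof. exact (inverse_coh _ HB _ _ f). Qed.

Lemma whisker_l_vcomp {X Y Z : ob BG} (g : hom Y Z) {f f' f'' : hom X Y} (a' : cell f' f'')
  (a : cell f f') :
  id2 g ⋆ (a' ∘ a) = (id2 g ⋆ a') ∘ (id2 g ⋆ a).
Proof. rewrite <- interchange, vcomp1l. reflexivity. Qed.
Lemma whisker_r_vcomp {X Y Z : ob BG} {g g' g'' : hom Y Z} (f : hom X Y) (b' : cell g' g'')
  (b : cell g g') :
  (b' ∘ b) ⋆ id2 f = (b' ⋆ id2 f) ∘ (b ⋆ id2 f).
Proof. rewrite <- interchange, vcomp1l. reflexivity. Qed.
Lemma interchange_lr {X Y Z : ob BG} {g g' : hom Y Z} {f f' : hom X Y} (b : cell g g')
  (a : cell f f') :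
  (b ⋆ id2 f') ∘ (id2 g ⋆ a) = b ⋆ a.
Proof. rewrite <- interchange, vcomp1l, vcomp1r. reflexivity. Qed.
Lemma interchange_rl {X Y Z : ob BG} {g g' : hom Y Z} {f f' : hom X Y} (b : cell g g')
  (a : cell f f') :
  (id2 g' ⋆ a) ∘ (b ⋆ id2 f) = b ⋆ a.
Proof. rewrite <- interchange, vcomp1l, vcomp1r. reflexivity. Qed.
Lemma vinv_hcomp2 {X Y Z : ob BG} {g g' : hom Y Z} {f f' : hom X Y} (b : cell g g')
  (a : cell f f') :
  vinv (b ⋆ a) = vinv b ⋆ vinv a.
Proof. symmetry. apply vinv_unique_l. rewrite <- interchange, !vcompVl, hcomp2_1. reflexivity. Qed.
Lemma assoc_inv_natural {W X Y Z : ob BG} {h h' : hom Y Z} {g g' : hom X Y} {f f' : hom W X}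
  (c : cell h h') (b : cell g g') (a : cell f f') :
  vinv (assoc h' g' f') ∘ (c ⋆ (b ⋆ a)) = ((c ⋆ b) ⋆ a) ∘ vinv (assoc h g f).
Proof.
  apply (cancel_l (assoc h' g' f')).
  rewrite vcompA, vcompVr, vcomp1l, vcompA, assoc_natural, <- vcompA, vcompVr, vcomp1r.
  reflexivity.
Qed.

(* Whiskering by an identity 1-cell is injective, by naturality of the unitors. *)
Lemma lunit_whisker_inj {X Y : ob BG} {f f' : hom X Y} (a b : cell f f') :
  id2 (id1 Y) ⋆ a = id2 (id1 Y) ⋆ b -> a = b.
Proof. intros E. apply (cancel_r (lunit f)). rewrite <- !lunit_natural, E. reflexivity. Qed.
Lemma runit_whisker_inj {X Y : ob BG} {f f' : hom X Y} (a b : cell f f') :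
  a ⋆ id2 (id1 X) = b ⋆ id2 (id1 X) -> a = b.
Proof. intros E. apply (cancel_r (runit f)). rewrite <- !runit_natural, E. reflexivity. Qed.

Lemma hcomp2_reassoc_l {W X Y Z : ob BG} {h h' : hom Y Z} {g g' : hom X Y} {f f' : hom W X}
  (c : cell h h') (b : cell g g') (a : cell f f') :
  (c ⋆ b) ⋆ a = vinv (assoc h' g' f') ∘ (c ⋆ (b ⋆ a)) ∘ assoc h g f.
Proof. rewrite <- vcompA, <- assoc_natural, vcompA, vcompVl, vcomp1l. reflexivity. Qed.
Lemma hcomp2_reassoc_r {W X Y Z : ob BG} {h h' : hom Y Z} {g g' : hom X Y} {f f' : hom W X}
  (c : cell h h') (b : cell g g') (a : cell f f') :
  c ⋆ (b ⋆ a) = assoc h' g' f' ∘ ((c ⋆ b) ⋆ a) ∘ vinv (assoc h g f).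
Proof. rewrite assoc_natural, <- vcompA, vcompVr, vcomp1r. reflexivity. Qed.

(* The left unitor of a composite, a consequence of the pentagon and the
   triangle (Kelly's lemma). *)
Lemma lunit_hcomp {X Y Z : ob BG} (g : hom Y Z) (f : hom X Y) :
  lunit (g ⊙ f) ∘ assoc (id1 Z) g f = lunit g ⋆ id2 f.
Proof.
  apply lunit_whisker_inj.
  apply (cancel_r (assoc (id1 Z) (id1 Z ⊙ g) f ∘ (assoc (id1 Z) (id1 Z) g ⋆ id2 f))).
  rewrite whisker_l_vcomp. reassoc. rewrite_chain (pentagon_law (id1 Z) (id1 Z) g f).
  rewrite_chain (triangle_law (id1 Z) (g ⊙ f)). rewrite <- hcomp2_1. rewrite <- assoc_natural.
  rewrite <- triangle_law. rewrite whisker_r_vcomp. reassoc. rewrite assoc_natural. reflexivity.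
Qed.

Lemma runit_hcomp {X Y Z : ob BG} (g : hom Y Z) (f : hom X Y) :
  (id2 g ⋆ runit f) ∘ assoc g f (id1 X) = runit (g ⊙ f).
Proof.
  apply runit_whisker_inj. apply (cancel_l (assoc g f (id1 X))).
  rewrite whisker_r_vcomp. reassoc. rewrite assoc_natural.
  rewrite <- (triangle_law (g ⊙ f) (id1 X)). rewrite <- hcomp2_1. reassoc. rewrite assoc_natural.
  rewrite_chain (eq_sym (pentagon_law g f (id1 X) (id1 X))).
  rewrite <- whisker_l_vcomp.
  rewrite triangle_law.
  reflexivity.
Qed.

Lemma lunit_whisker_id1 {X Y : ob BG} (f : hom X Y) : lunit (id1 Y ⊙ f) = id2 (id1 Y) ⋆ lunit f.
Proof. apply (cancel_l (lunit f)). rewrite lunit_natural. reflexivity. Qed.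

Lemma lwhisker_id1_conj {X Y : ob BG} {f f' : hom X Y} (a : cell f f') :
  id2 (id1 Y) ⋆ a = vinv (lunit f') ∘ a ∘ lunit f.
Proof. rewrite <- vcompA, <- lunit_natural, vcompA, vcompVl, vcomp1l. reflexivity. Qed.
Lemma rwhisker_id1_conj {X Y : ob BG} {f f' : hom X Y} (a : cell f f') :
  a ⋆ id2 (id1 X) = vinv (runit f') ∘ a ∘ runit f.
Proof. rewrite <- vcompA, <- runit_natural, vcompA, vcompVl, vcomp1l. reflexivity. Qed.

Lemma lunit_runit_id1 (X : ob BG) : lunit (id1 X) = runit (id1 X).
Proof.
  apply runit_whisker_inj. rewrite <- lunit_hcomp, <- triangle_law, lunit_whisker_id1. reflexivity.
Qed.

Lemma whisker_l_transport {X Y Y' : ob BG} {u v : hom Y Y'} (t : cell u v) {p q : hom X Y}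
  (x : cell p q) :
  id2 v ⋆ x = (t ⋆ id2 q) ∘ (id2 u ⋆ x) ∘ vinv (t ⋆ id2 p).
Proof.
  rewrite interchange_lr, <- (interchange_rl t x), <- vcompA, vcompVr, vcomp1r.
  reflexivity.
Qed.
Lemma whisker_r_transport {X W : ob BG} {u v : hom X X} (t : cell u v) {p q : hom X W}
  (x : cell p q) :
  x ⋆ id2 v = (id2 q ⋆ t) ∘ (x ⋆ id2 u) ∘ vinv (id2 p ⋆ t).
Proof.
  rewrite interchange_rl, <- (interchange_lr x t), <- vcompA, vcompVr, vcomp1r.
  reflexivity.
Qed.

(* Whiskering by any 1-cell c is injective on 2-cells: whiskering further by
   c^* amounts to whiskering by c^* * c, which is conjugate along e to
   whiskering by 1, and the latter is injective. *)
Lemma whisker_l_inj {X Y Z : ob BG} (c : hom Y Z) {p q : hom X Y} (x y : cell p q) :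
  id2 c ⋆ x = id2 c ⋆ y -> x = y.
Proof.
  intros E. apply lunit_whisker_inj.
  assert (E2 : id2 (inv1 c ⊙ c) ⋆ x = id2 (inv1 c ⊙ c) ⋆ y).
  { rewrite <- hcomp2_1, !hcomp2_reassoc_l, E. reflexivity. }
  rewrite (whisker_l_transport (ecell c) x), (whisker_l_transport (ecell c) y), E2. reflexivity.
Qed.

(* Symmetrically, right whiskering is injective, using i instead of e. *)
Lemma whisker_r_inj {X Y W : ob BG} (h : hom X Y) {p q : hom Y W} (x y : cell p q) :
  x ⋆ id2 h = y ⋆ id2 h -> x = y.
Proof.
  intros E. apply runit_whisker_inj.
  assert (E2 : x ⋆ id2 (h ⊙ inv1 h) = y ⋆ id2 (h ⊙ inv1 h)).
  { rewrite <- hcomp2_1, !hcomp2_reassoc_r, E. reflexivity. }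
  apply (cancel_l (id2 q ⋆ icell h)).
  rewrite !interchange_rl, <- (interchange_lr x (icell h)), <- (interchange_lr y (icell h)), E2.
  reflexivity.
Qed.

(* Left whiskering by c is also surjective: unwhisker_l c t is an explicit
   preimage of t : c * p => c * q. *)
Definition unwhisker_l {X Y Z : ob BG} (c : hom Y Z) {p q : hom X Y} (t : cell (c ⊙ p)
  (c ⊙ q)) : cell p q :=
  lunit q ∘ (ecell c ⋆ id2 q) ∘ vinv (assoc (inv1 c) c q) ∘ (id2 (inv1 c) ⋆ t)
  ∘ assoc (inv1 c) c p ∘ vinv (ecell c ⋆ id2 p) ∘ vinv (lunit p).

Lemma whisker_unwhisker_l {X Y Z : ob BG} (c : hom Y Z) {p q : hom X Y} (t : cell (c ⊙ p) (c ⊙ q)) :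
  id2 c ⋆ unwhisker_l c t = t.
Proof.
  apply (whisker_l_inj (inv1 c)).
  assert (E : forall z : cell p q, id2 (inv1 c) ⋆ (id2 c ⋆ z)
     = assoc (inv1 c) c q ∘ vinv (ecell c ⋆ id2 q) ∘ vinv (lunit q) ∘ z ∘ lunit p
         ∘ (ecell c ⋆ id2 p)
       ∘ vinv (assoc (inv1 c) c p)).
  { intros z.
  rewrite hcomp2_reassoc_r, hcomp2_1, (whisker_l_transport (vinv (ecell c)) z), !vinv_hcomp2,
      !vinvK,
      !vinv_id2, lwhisker_id1_conj.
    reassoc. reflexivity. }
  rewrite E. unfold unwhisker_l. reassoc.
  cancel_inverses. reflexivity.
Qed.

Definition unwhisker_r {X Y W : ob BG} (h : hom X Y) {p q : hom Y W} (t : cell (p ⊙ h)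
  (q ⊙ h)) : cell p q :=
  runit q ∘ vinv (id2 q ⋆ icell h) ∘ assoc q h (inv1 h) ∘ (t ⋆ id2 (inv1 h))
  ∘ vinv (assoc p h (inv1 h)) ∘ (id2 p ⋆ icell h) ∘ vinv (runit p).

Lemma whisker_unwhisker_r {X Y W : ob BG} (h : hom X Y) {p q : hom Y W} (t : cell (p ⊙ h) (q ⊙ h)) :
  unwhisker_r h t ⋆ id2 h = t.
Proof.
  apply (whisker_r_inj (inv1 h)).
  rewrite hcomp2_reassoc_l, hcomp2_1, (whisker_r_transport (icell h)), rwhisker_id1_conj.
  unfold unwhisker_r.
  reassoc.
  cancel_inverses.
  reflexivity.
Qed.

Lemma unwhisker_l_unique {X Y Z : ob BG} (c : hom Y Z) {p q : hom X Y} (t : cell (c ⊙ p) (c ⊙ q))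
  (x : cell p q) :
  id2 c ⋆ x = t -> unwhisker_l c t = x.
Proof. intros E. apply (whisker_l_inj c). rewrite whisker_unwhisker_l. symmetry. exact E. Qed.

Lemma vinv_whisker_l {X Y Z : ob BG} (g : hom Y Z) {f f' : hom X Y} (a : cell f f') :
  vinv (id2 g ⋆ a) = id2 g ⋆ vinv a.
Proof. rewrite vinv_hcomp2, vinv_id2. reflexivity. Qed.
Lemma vinv_whisker_r {X Y Z : ob BG} {g g' : hom Y Z} (f : hom X Y) (a : cell g g') :
  vinv (a ⋆ id2 f) = vinv a ⋆ id2 f.
Proof. rewrite vinv_hcomp2, vinv_id2. reflexivity. Qed.

Lemma lunit_hcomp_inv {X Y Z : ob BG} (g : hom Y Z) (f : hom X Y) :
  (lunit g ⋆ id2 f) ∘ vinv (assoc (id1 Z) g f) = lunit (g ⊙ f).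
Proof. rewrite <- lunit_hcomp. cancel_inverses. reflexivity. Qed.
Lemma triangle_runit {X Y Z : ob BG} (g : hom Y Z) (f : hom X Y) :
  (runit g ⋆ id2 f) ∘ vinv (assoc g (id1 Y) f) = id2 g ⋆ lunit f.
Proof. rewrite <- triangle_law. cancel_inverses. reflexivity. Qed.

Lemma hcomp2_drop_r {X Y Z : ob BG} {g g' : hom Y Z} {f f' : hom X Y} (x y : cell g g')
  (t : cell f f') :
  x ⋆ t = y ⋆ t -> x ⋆ id2 f = y ⋆ id2 f.
Proof.
  intros E. assert (K : forall z : cell g g', z ⋆ id2 f = (id2 g' ⋆ vinv t) ∘ (z ⋆ t)).
  { intros z. rewrite <- interchange, vcomp1l, vcompVl. reflexivity. }
  rewrite !K, E. reflexivity.
Qed.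

Lemma runit_inv_natural {X Y : ob BG} {f f' : hom X Y} (a : cell f f') :
  vinv (runit f') ∘ a = (a ⋆ id2 (id1 X)) ∘ vinv (runit f).
Proof. rewrite rwhisker_id1_conj. cancel_inverses. reflexivity. Qed.
Lemma triangle_vinv {X Y Z : ob BG} (g : hom Y Z) (f : hom X Y) :
  assoc g (id1 Y) f ∘ (vinv (runit g) ⋆ id2 f) = id2 g ⋆ vinv (lunit f).
Proof.
  rewrite <- vinv_whisker_l.
  apply vinv_unique_r.
  rewrite vcompA, triangle_law, <- interchange, vcompVr, vcomp1l, hcomp2_1.
  reflexivity.
Qed.
Lemma runit_hcomp_inv {X Y Z : ob BG} (g : hom Y Z) (f : hom X Y) :
  vinv (assoc g f (id1 X)) ∘ (id2 g ⋆ vinv (runit f)) = vinv (runit (g ⊙ f)).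
Proof. rewrite <- runit_hcomp, vinv_vcomp, vinv_whisker_l. reflexivity. Qed.

Section PentagonRearrangements.
Context {V W X' Y Z : ob BG} (x : hom Y Z) (y : hom X' Y) (z : hom W X') (w : hom V W).
Lemma pentagon_inv : vinv (assoc x y z ⋆ id2 w) ∘ vinv (assoc x (y ⊙ z) w)
  ∘ (id2 x ⋆ vinv (assoc y z w))
  = vinv (assoc (x ⊙ y) z w) ∘ vinv (assoc x y (z ⊙ w)).
Proof.
  rewrite <- vinv_whisker_l, <- !vinv_vcomp. f_equal. reassoc. apply pentagon_law.
Qed.
Lemma pentagon_rearr1 : vinv (assoc x (y ⊙ z) w) ∘ (id2 x ⋆ vinv (assoc y z w))
  = (assoc x y z ⋆ id2 w) ∘ vinv (assoc (x ⊙ y) z w) ∘ vinv (assoc x y (z ⊙ w)).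
Proof.
  apply (cancel_l (vinv (assoc x y z ⋆ id2 w))).
  reassoc.
  rewrite pentagon_inv.
  cancel_inverses.
  reflexivity.
Qed.
Lemma pentagon_rearr2 : vinv (assoc x y (z ⊙ w)) ∘ (id2 x ⋆ assoc y z w)
  = assoc (x ⊙ y) z w ∘ (vinv (assoc x y z) ⋆ id2 w) ∘ vinv (assoc x (y ⊙ z) w).
Proof.
  apply (cancel_l (assoc x y (z ⊙ w))).
  reassoc.
  rewrite <- pentagon_law, <- vinv_whisker_r.
  cancel_inverses.
  reflexivity.
Qed.
Lemma pentagon_rearr3 : vinv (assoc x (y ⊙ z) w) ∘ (id2 x ⋆ vinv (assoc y z w)) ∘ assoc x y (z ⊙ w)
  = (assoc x y z ⋆ id2 w) ∘ vinv (assoc (x ⊙ y) z w).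
Proof. rewrite pentagon_rearr1. cancel_inverses. reflexivity. Qed.
Lemma pentagon_rearr4 : vinv (assoc (x ⊙ y) z w) ∘ vinv (assoc x y (z ⊙ w)) ∘ (id2 x ⋆ assoc y z w)
  = (vinv (assoc x y z) ⋆ id2 w) ∘ vinv (assoc x (y ⊙ z) w).
Proof.
  rewrite <- pentagon_inv, vinv_whisker_r, <- vcompA, <- whisker_l_vcomp, vcompVl, hcomp2_1,
      vcomp1r.
  reflexivity.
Qed.
End PentagonRearrangements.

(* This is how the
   squares of composable 1-cells of the mapping-path bigroupoid compose. *)
Definition paste {Z1 Z2 Z3 Y1 Y2 Y3 : ob BG} {c1 : hom Z1 Y1} {c2 : hom Z2 Y2} {c3 : hom Z3 Y3}
  {k2 : hom Z2 Z3} {k1 : hom Z1 Z2} {u2 : hom Y2 Y3} {u1 : hom Y1 Y2}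
  (r2 : cell (c3 ⊙ k2) (u2 ⊙ c2)) (r1 : cell (c2 ⊙ k1) (u1 ⊙ c1)) :
  cell (c3 ⊙ (k2 ⊙ k1)) ((u2 ⊙ u1) ⊙ c1) :=
  vinv (assoc u2 u1 c1) ∘ (id2 u2 ⋆ r1) ∘ assoc u2 c2 k1 ∘ (r2 ⋆ id2 k1)
  ∘ vinv (assoc c3 k2 k1).

Lemma paste_whisker_r {Z1 Z2 Z3 Y1 Y2 Y3 : ob BG} {c1 : hom Z1 Y1} {c2 : hom Z2 Y2} {c3 : hom Z3 Y3}
  {k2 : hom Z2 Z3} {k1 : hom Z1 Z2} {u2 : hom Y2 Y3} {u1 u1' : hom Y1 Y2}
  (r2 : cell (c3 ⊙ k2) (u2 ⊙ c2)) (t : cell u1 u1') (r1 : cell (c2 ⊙ k1) (u1 ⊙ c1)) :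
  paste r2 ((t ⋆ id2 c1) ∘ r1) = ((id2 u2 ⋆ t) ⋆ id2 c1) ∘ paste r2 r1.
Proof.
  unfold paste.
  rewrite whisker_l_vcomp.
  reassoc.
  rewrite_chain (assoc_inv_natural (id2 u2) t (id2 c1)).
  reflexivity.
Qed.
Lemma paste_whisker_l {Z1 Z2 Z3 Y1 Y2 Y3 : ob BG} {c1 : hom Z1 Y1} {c2 : hom Z2 Y2} {c3 : hom Z3 Y3}
  {k2 : hom Z2 Z3} {k1 : hom Z1 Z2} {u2 u2' : hom Y2 Y3} {u1 : hom Y1 Y2}
  (t : cell u2 u2') (r2 : cell (c3 ⊙ k2) (u2 ⊙ c2)) (r1 : cell (c2 ⊙ k1) (u1 ⊙ c1)) :
  paste ((t ⋆ id2 c2) ∘ r2) r1 = ((t ⋆ id2 u1) ⋆ id2 c1) ∘ paste r2 r1.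
Proof.
  unfold paste.
  rewrite whisker_r_vcomp.
  reassoc.
  rewrite_chain (assoc_natural t (id2 c2) (id2 k1)).
  rewrite hcomp2_1.
  rewrite_chain (interchange_rl t r1).
  rewrite <- (interchange_lr t r1).
  reassoc.
  rewrite <- (hcomp2_1 u1 c1).
  rewrite_chain (assoc_inv_natural t (id2 u1) (id2 c1)). reflexivity.
Qed.

Lemma paste_assoc {Z1 Z2 Z3 Z4 Y1 Y2 Y3 Y4 : ob BG}
  {c1 : hom Z1 Y1} {c2 : hom Z2 Y2} {c3 : hom Z3 Y3} {c4 : hom Z4 Y4}
  {k3 : hom Z3 Z4} {k2 : hom Z2 Z3} {k1 : hom Z1 Z2}
  {u3 : hom Y3 Y4} {u2 : hom Y2 Y3} {u1 : hom Y1 Y2}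
  (r3 : cell (c4 ⊙ k3) (u3 ⊙ c3)) (r2 : cell (c3 ⊙ k2) (u2 ⊙ c2))
  (r1 : cell (c2 ⊙ k1) (u1 ⊙ c1)) :
  paste r3 (paste r2 r1) ∘ (id2 c4 ⋆ assoc k3 k2 k1)
  = (assoc u3 u2 u1 ⋆ id2 c1) ∘ paste (paste r3 r2) r1.
Proof.
  unfold paste. rewrite !whisker_l_vcomp, !whisker_r_vcomp. reassoc.
  rewrite pentagon_rearr1. rewrite_chain (assoc_inv_natural (id2 u3) (id2 u2) r1). rewrite hcomp2_1.
  rewrite_chain (pentagon_rearr2 u3 u2 c2 k1).
  rewrite_chain (assoc_inv_natural (id2 u3) r2 (id2 k1)).
  rewrite_chain (pentagon_rearr3 u3 c3 k2 k1).
  rewrite <- (hcomp2_1 k2 k1).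
  rewrite_chain (assoc_inv_natural r3 (id2 k2) (id2 k1)).
  rewrite_chain (pentagon_rearr4 c4 k3 k2 k1). reflexivity.
Qed.

End BigroupoidCalculus.

Lemma mordata_ext {A C : BGData} (F : MorData A C)
  (m2' : forall (X Y : ob A) (f g : hom X Y), cell f g -> cell (m1 F f) (m1 F g))
  (pc' : forall (X Y Z : ob A) (g : hom Y Z) (f : hom X Y), cell (m1 F g ⊙ m1 F f) (m1 F (g ⊙ f)))
  (pu' : forall X : ob A, cell (id1 (m0 F X)) (m1 F (id1 X)))
  (pi' : forall (X Y : ob A) (f : hom X Y), cell (inv1 (m1 F f)) (m1 F (inv1 f)))
  (E2 : forall X Y f g a, m2' X Y f g a = m2 F a)
  (Ec : forall X Y Z g f, pc' X Y Z g f = phi_c F g f)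
  (Eu : forall X, pu' X = phi_u F X)
  (Ei : forall X Y f, pi' X Y f = phi_i F f) :
  F = Build_MorData A C (fun X => m0 F X) (fun X Y f => m1 F f) m2' pc' pu' pi'.
Proof.
  destruct F as [f0 f1 f2 fc fu fi]. simpl in *.
  assert (f2 = m2') by (repeat (apply functional_extensionality_dep; intro); symmetry; auto).
  assert (fc = pc') by (repeat (apply functional_extensionality_dep; intro); symmetry; auto).
  assert (fu = pu') by (repeat (apply functional_extensionality_dep; intro); symmetry; auto).
  assert (fi = pi') by (repeat (apply functional_extensionality_dep; intro); symmetry; auto).
  subst. reflexivity.
Qed.

Section MappingPath.
Context {A C : Bigroupoid} (F : MorData A C).

Record MpOb := mkMpOb { mp_c : ob C; mp_a : ob A; mp_path : hom mp_c (m0 F mp_a) }.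
Record MpHom (P Q : MpOb) := mkMpHom { mh_a : hom (mp_a P) (mp_a Q); mh_c : hom (mp_c P) (mp_c Q);
  mh_sq : cell (mp_path Q ⊙ mh_c) (m1 F mh_a ⊙ mp_path P) }.
Arguments mkMpHom {P Q}.
Arguments mh_a {P Q}.
Arguments mh_c {P Q}.
Arguments mh_sq {P Q}.

Definition sq_comp {P Q R : MpOb} (b : MpHom Q R) (a : MpHom P Q) :
  cell (mp_path R ⊙ (mh_c b ⊙ mh_c a)) (m1 F (mh_a b ⊙ mh_a a) ⊙ mp_path P) :=
  (phi_c F (mh_a b) (mh_a a) ⋆ id2 (mp_path P)) ∘ paste (mh_sq b) (mh_sq a).

Definition mp_comp {P Q R : MpOb} (b : MpHom Q R) (a : MpHom P Q) : MpHom P R :=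
  mkMpHom (mh_a b ⊙ mh_a a) (mh_c b ⊙ mh_c a) (sq_comp b a).

Definition sq_id (P : MpOb) : cell (mp_path P ⊙ id1 (mp_c P)) (m1 F (id1 (mp_a P)) ⊙ mp_path P) :=
  (phi_u F (mp_a P) ⋆ id2 (mp_path P)) ∘ vinv (lunit (mp_path P)) ∘ runit (mp_path P).

Definition mp_id (P : MpOb) : MpHom P P := mkMpHom (id1 (mp_a P)) (id1 (mp_c P)) (sq_id P).

(* The inverse of (f, h, s) is (f^*, h^*, s^-), where s^- is the 2-cell
   whose right whiskering by h is the inverse of s pasted with the square
   sq_ecell relating e in C and e in A. *)
Definition sq_ecell {P Q : MpOb} (a : MpHom P Q) :
  cell (mp_path P ⊙ (inv1 (mh_c a) ⊙ mh_c a)) (m1 F (inv1 (mh_a a) ⊙ mh_a a) ⊙ mp_path P) :=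
  vinv (m2 F (ecell (mh_a a)) ⋆ id2 (mp_path P)) ∘ sq_id P ∘ (id2 (mp_path P) ⋆ ecell (mh_c a)).

Definition sq_inv {P Q : MpOb} (a : MpHom P Q) : cell (mp_path P ⊙ inv1 (mh_c a))
  (m1 F (inv1 (mh_a a)) ⊙ mp_path Q) :=
  unwhisker_r (mh_c a)
   (vinv (assoc (m1 F (inv1 (mh_a a))) (mp_path Q) (mh_c a))
       ∘ (id2 (m1 F (inv1 (mh_a a))) ⋆ vinv (mh_sq a))
    ∘ assoc (m1 F (inv1 (mh_a a))) (m1 F (mh_a a)) (mp_path P) ∘ vinv (phi_c F (inv1 (mh_a a))
        (mh_a a) ⋆ id2 (mp_path P))
    ∘ sq_ecell a ∘ assoc (mp_path P) (inv1 (mh_c a)) (mh_c a)).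

Definition mp_inv {P Q : MpOb} (a : MpHom P Q) : MpHom Q P :=
  mkMpHom (inv1 (mh_a a)) (inv1 (mh_c a)) (sq_inv a).

Definition MapPathData : BGData := {|
  ob := MpOb; hom := MpHom;
  cell := fun P Q a b => cell (mh_a a) (mh_a b);
  vcomp := fun P Q a b c y x => @vcomp A _ _ _ _ _ y x;
  id2 := fun P Q a => @id2 A _ _ (mh_a a);
  vinv := fun P Q a b x => @vinv A _ _ _ _ x;
  hcomp := @mp_comp;
  hcomp2 := fun P Q R b b' a a' y x => @hcomp2 A _ _ _ _ _ _ _ y x;
  id1 := mp_id; inv1 := @mp_inv;
  inv2 := fun P Q a b x => @inv2 A _ _ _ _ x;
  assoc := fun P Q R S c b a => assoc (mh_a c) (mh_a b) (mh_a a);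
  lunit := fun P Q a => lunit (mh_a a);
  runit := fun P Q a => runit (mh_a a);
  ecell := fun P Q a => ecell (mh_a a);
  icell := fun P Q a => icell (mh_a a) |}.

(* Each axiom of B is literally the corresponding axiom of A. *)
Lemma MapPath_axioms : IsBigroupoid MapPathData.
Proof.
  destruct (bg_ax A). constructor; intros; simpl; eauto.
Qed.

Definition MapPath : Bigroupoid := {| bg_data := MapPathData; bg_ax := MapPath_axioms |}.

Definition incl_ob (X : ob A) : MpOb := mkMpOb (m0 F X) X (id1 (m0 F X)).
Definition incl_hom {X Y : ob A} (f : hom X Y) : MpHom (incl_ob X) (incl_ob Y) :=
  @mkMpHom (incl_ob X) (incl_ob Y) f (m1 F f) (vinv (runit (m1 F f)) ∘ lunit (m1 F f)).

Definition Incl : MorData A MapPath := Build_MorData A MapPath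
  incl_ob
  (fun X Y f => incl_hom f)
  (fun X Y f g a => a)
  (fun X Y Z g f => @id2 A _ _ (g ⊙ f))
  (fun X => @id2 A _ _ (id1 X))
  (fun X Y f => @id2 A _ _ (inv1 f)).

Definition proj_cell {P Q : MpOb} (a a' : MpHom P Q) (x : cell (mh_a a) (mh_a a')) :
  cell (mh_c a) (mh_c a') :=
  unwhisker_l (mp_path Q) (vinv (mh_sq a') ∘ (m2 F x ⋆ id2 (mp_path P)) ∘ mh_sq a).

Definition Proj : MorData MapPath C := Build_MorData MapPath C
  mp_c
  (fun P Q a => mh_c a)
  (fun P Q a b x => proj_cell a b x)
  (fun P Q R b a => id2 (mh_c b ⊙ mh_c a))
  (fun P => id2 (id1 (mp_c P)))
  (fun P Q a => id2 (inv1 (mh_c a))).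

Lemma proj_cell_whisker {P Q : MpOb} (a a' : MpHom P Q) (x : cell (mh_a a) (mh_a a')) :
  id2 (mp_path Q) ⋆ proj_cell a a' x = vinv (mh_sq a') ∘ (m2 F x ⋆ id2 (mp_path P)) ∘ mh_sq a.
Proof. apply whisker_unwhisker_l. Qed.
Lemma proj_cell_square {P Q : MpOb} (a a' : MpHom P Q) (x : cell (mh_a a) (mh_a a')) :
  mh_sq a' ∘ (id2 (mp_path Q) ⋆ proj_cell a a' x) = (m2 F x ⋆ id2 (mp_path P)) ∘ mh_sq a.
Proof. rewrite proj_cell_whisker. reassoc. cancel_inverses. reflexivity. Qed.
Lemma proj_cell_unique {P Q : MpOb} (a a' : MpHom P Q) (x : cell (mh_a a) (mh_a a'))
  (y : cell (mh_c a) (mh_c a')) :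
  mh_sq a' ∘ (id2 (mp_path Q) ⋆ y) = (m2 F x ⋆ id2 (mp_path P)) ∘ mh_sq a -> proj_cell a a' x = y.
Proof.
  intros E.
  apply unwhisker_l_unique.
  rewrite <- vcompA, <- E.
  reassoc.
  cancel_inverses.
  reflexivity.
Qed.

Context (HF : IsMorphism F).

(* H is functorial on 2-cells and preserves horizontal composition, hence
   (H being strict) each axiom of a morphism reduces to H preserving the
   corresponding structure 2-cell. *)
Lemma proj_id2 {P Q : MpOb} (a : MpHom P Q) : proj_cell a a (id2 (mh_a a)) = id2 (mh_c a).
Proof.
  apply proj_cell_unique. rewrite (m2_id _ _ _ HF), !hcomp2_1, vcomp1r, vcomp1l. reflexivity.
Qed.
Lemma proj_vcomp {P Q : MpOb} (a a' a'' : MpHom P Q) (y : cell (mh_a a') (mh_a a''))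
  (x : cell (mh_a a) (mh_a a')) :
  proj_cell a a'' (y ∘ x) = proj_cell a' a'' y ∘ proj_cell a a' x.
Proof.
  apply proj_cell_unique.
  rewrite whisker_l_vcomp.
  reassoc.
  rewrite proj_cell_square.
  rewrite_chain (proj_cell_square a a' x).
  rewrite (m2_vcomp _ _ _ HF), whisker_r_vcomp. reassoc. reflexivity.
Qed.

Lemma proj_hcomp2 {P Q R : MpOb} (b b' : MpHom Q R) (a a' : MpHom P Q)
  (y : cell (mh_a b) (mh_a b')) (x : cell (mh_a a) (mh_a a')) :
  proj_cell (mp_comp b a) (mp_comp b' a') (y ⋆ x) = proj_cell b b' y ⋆ proj_cell a a' x.
Proof.
  apply proj_cell_unique. change (mh_sq (mp_comp b' a')) with (sq_comp b' a').
  change (mh_sq (mp_comp b a)) with (sq_comp b a). unfold sq_comp, paste. reassoc.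
  set (Hy := proj_cell b b' y). set (Hx := proj_cell a a' x).
  rewrite_chain (assoc_inv_natural (id2 (mp_path R)) Hy Hx).
  rewrite <- (interchange_lr (id2 (mp_path R) ⋆ Hy) Hx).
  reassoc.
  rewrite_chain (eq_sym (whisker_r_vcomp (mh_c a') (mh_sq b') (id2 (mp_path R) ⋆ Hy))).
  unfold Hy. rewrite proj_cell_square. fold Hy. rewrite whisker_r_vcomp. reassoc.
  rewrite_chain (interchange_lr (mh_sq b) Hx). rewrite <- (interchange_rl (mh_sq b) Hx). reassoc.
  rewrite_chain (interchange_lr (m2 F y ⋆ id2 (mp_path Q)) Hx).
  rewrite_chain (assoc_natural (m2 F y) (id2 (mp_path Q)) Hx).
  rewrite <- (interchange_rl (m2 F y) (id2 (mp_path Q) ⋆ Hx)). reassoc.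
  rewrite_chain (eq_sym (whisker_l_vcomp (m1 F (mh_a b')) (mh_sq a') (id2 (mp_path Q) ⋆ Hx))).
  unfold Hx. rewrite proj_cell_square. rewrite whisker_l_vcomp. reassoc.
  rewrite_chain (interchange_rl (m2 F y) (mh_sq a)).
  rewrite <- (interchange_lr (m2 F y) (mh_sq a)).
  reassoc.
  rewrite_chain (interchange_rl (m2 F y) (m2 F x ⋆ id2 (mp_path P))).
  rewrite_chain (assoc_inv_natural (m2 F y) (m2 F x) (id2 (mp_path P))).
  rewrite <- whisker_r_vcomp.
  rewrite (phi_c_nat _ _ _ HF), whisker_r_vcomp. reassoc. reflexivity.
Qed.

(* H preserves the associator: this is the associativity of pasting. *)
Lemma proj_assoc {P Q R S : MpOb} (c : MpHom R S) (b : MpHom Q R) (a : MpHom P Q) :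
  proj_cell (mp_comp (mp_comp c b) a) (mp_comp c (mp_comp b a)) (assoc (mh_a c) (mh_a b) (mh_a a))
  = assoc (mh_c c) (mh_c b) (mh_c a).
Proof.
  apply proj_cell_unique.
  change (mh_sq (mp_comp c (mp_comp b a))) with (sq_comp c (mp_comp b a)).
  change (mh_sq (mp_comp (mp_comp c b) a)) with (sq_comp (mp_comp c b) a).
  unfold sq_comp, mp_comp. simpl. unfold sq_comp. rewrite paste_whisker_r, paste_whisker_l. reassoc.
  rewrite_chain (paste_assoc (mh_sq c) (mh_sq b) (mh_sq a)).
  rewrite <- !whisker_r_vcomp. rewrite (mor_assoc _ _ _ HF). reflexivity.
Qed.

(* H preserves the unitors and e; the right unitor is reduced to the left one
   by the triangle law, and i to the others by the inverse law. *)
Lemma proj_lunit {P Q : MpOb} (a : MpHom P Q) :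
  proj_cell (mp_comp (mp_id Q) a) a (lunit (mh_a a)) = lunit (mh_c a).
Proof.
  apply proj_cell_unique. unfold mp_comp, mp_id. simpl. unfold sq_comp, sq_id. simpl.
  rewrite <- (vcompA (phi_u F (mp_a Q) ⋆ id2 (mp_path Q))), paste_whisker_l.
  reassoc. rewrite <- !whisker_r_vcomp.
  rewrite (mor_lunit _ _ _ HF). unfold paste. reassoc.
  rewrite_chain (lunit_hcomp_inv (m1 F (mh_a a)) (mp_path P)).
  rewrite_chain (lunit_natural (mh_sq a)).
  rewrite_chain (lunit_hcomp (mp_path Q) (mh_c a)).
  rewrite_chain (eq_sym (whisker_r_vcomp (mh_c a) (lunit (mp_path Q))
                                          (vinv (lunit (mp_path Q)) ∘ runit (mp_path Q)))).
  rewrite vcompVr, vcomp1l. rewrite_chain (triangle_runit (mp_path Q) (mh_c a)). reflexivity.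
Qed.

Lemma proj_ecell {P Q : MpOb} (a : MpHom P Q) :
  proj_cell (mp_comp (mp_inv a) a) (mp_id P) (ecell (mh_a a)) = ecell (mh_c a).
Proof.
  apply proj_cell_unique. unfold mp_comp, mp_id, mp_inv. simpl. unfold sq_comp, paste. simpl.
  unfold sq_inv. rewrite whisker_unwhisker_r. reassoc. cancel_inverses.
  rewrite_chain (eq_sym (whisker_l_vcomp (m1 F (inv1 (mh_a a))) (mh_sq a) (vinv (mh_sq a)))).
  rewrite vcompVr, hcomp2_1, vcomp1r.
  cancel_inverses.
  unfold sq_ecell. reassoc. cancel_inverses. reflexivity.
Qed.

Lemma proj_runit {Q R : MpOb} (b : MpHom Q R) :
  proj_cell (mp_comp b (mp_id Q)) b (runit (mh_a b)) = runit (mh_c b).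
Proof.
  apply (whisker_r_inj (id1 (mp_c Q))).
  assert (E : @proj_cell Q R (mp_comp (mp_comp b (mp_id Q)) (mp_id Q)) (mp_comp b (mp_id Q))
     ((id2 (mh_a b) ⋆ lunit (mh_a (mp_id Q))) ∘ assoc (mh_a b) (id1 (mp_a Q)) (mh_a (mp_id Q)))
     = @proj_cell Q R (mp_comp (mp_comp b (mp_id Q)) (mp_id Q)) (mp_comp b (mp_id Q))
     (runit (mh_a b) ⋆ id2 (mh_a (mp_id Q)))).
  { f_equal. apply triangle_law. }
  rewrite (proj_vcomp (mp_comp (mp_comp b (mp_id Q)) (mp_id Q))
                      (mp_comp b (mp_comp (mp_id Q) (mp_id Q))) (mp_comp b (mp_id Q))) in E.
  rewrite !proj_hcomp2, !proj_id2, proj_lunit, proj_assoc in E.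
  simpl in E |- *. rewrite <- E. apply triangle_law.
Qed.

Lemma proj_icell {P Q : MpOb} (a : MpHom P Q) :
  proj_cell (mp_id Q) (mp_comp a (mp_inv a)) (icell (mh_a a)) = icell (mh_c a).
Proof.
  apply (whisker_r_inj (mh_c a)).
  assert (E : @proj_cell P Q (mp_comp (mp_id Q) a) a
     (runit (mh_a a) ∘ (id2 (mh_a a) ⋆ ecell (mh_a a)) ∘ assoc (mh_a a) (inv1 (mh_a a)) (mh_a a)
         ∘ (icell (mh_a a) ⋆ id2 (mh_a a)))
     = @proj_cell P Q (mp_comp (mp_id Q) a) a (lunit (mh_a a))).
  { f_equal. apply inverse_law. }
  rewrite (proj_vcomp (mp_comp (mp_id Q) a) (mp_comp (mp_comp a (mp_inv a)) a) a) in E.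
  rewrite (proj_vcomp (mp_comp (mp_comp a (mp_inv a)) a) (mp_comp a (mp_comp (mp_inv a) a)) a) in E.
  rewrite (proj_vcomp (mp_comp a (mp_comp (mp_inv a) a)) (mp_comp a (mp_id P)) a) in E.
  rewrite !proj_hcomp2, !proj_id2, proj_lunit, proj_assoc, proj_runit, proj_ecell in E.
  simpl in E. rewrite <- inverse_law in E.
  apply (cancel_l (runit (mh_c a) ∘ (id2 (mh_c a) ⋆ ecell (mh_c a))
                   ∘ assoc (mh_c a) (inv1 (mh_c a)) (mh_c a))).
  reassoc. exact E.
Qed.

(* H commutes with inversion of 2-cells, by naturality of e. *)
Lemma proj_inv2 {P Q : MpOb} (a a' : MpHom P Q) (x : cell (mh_a a) (mh_a a')) :
  proj_cell (mp_inv a) (mp_inv a') (inv2 x) = inv2 (proj_cell a a' x).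
Proof.
  apply (whisker_r_inj (mh_c a)).
  assert (E : @proj_cell P P (mp_comp (mp_inv a) a) (mp_id P) (ecell (mh_a a') ∘ (inv2 x ⋆ x))
     = @proj_cell P P (mp_comp (mp_inv a) a) (mp_id P) (id2 (id1 (mp_a P)) ∘ ecell (mh_a a))).
  { f_equal. apply ecell_natural. }
  rewrite (proj_vcomp (mp_comp (mp_inv a) a) (mp_comp (mp_inv a') a') (mp_id P)) in E.
  rewrite (proj_vcomp (mp_comp (mp_inv a) a) (mp_id P) (mp_id P)) in E.
  rewrite proj_hcomp2, !proj_ecell in E.
  rewrite (proj_id2 (mp_id P) : proj_cell (mp_id P) (mp_id P) (id2 (id1 (mp_a P)))
      = id2 (id1 (mp_c P))) in E.
  simpl in E. rewrite <- (ecell_natural (proj_cell a a' x)) in E.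
  apply cancel_l in E. exact (hcomp2_drop_r _ _ _ E).
Qed.

Lemma Proj_morphism : IsMorphism Proj.
Proof.
  constructor; intros; simpl;
    repeat first [rewrite hcomp2_1 | rewrite vcomp1l | rewrite vcomp1r].
  - apply proj_id2.
  - apply proj_vcomp.
  - symmetry. apply proj_hcomp2.
  - symmetry. apply proj_inv2.
  - apply proj_assoc.
  - apply proj_runit.
  - apply proj_lunit.
  - apply proj_ecell.
  - apply proj_icell.
Qed.

Lemma Incl_morphism : IsMorphism Incl.
Proof.
  constructor; intros; simpl;
    repeat first [rewrite hcomp2_1 | rewrite vcomp1l | rewrite vcomp1r]; reflexivity.
Qed.

(* H is a fibration: a 1-cell b : Z -> H P lifts to (1, b, _) with source
   (Z, X, c * b), and a 2-cell β : b => H a' lifts to the identity 2-cell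
   of the 1-cell (f', b, s' o (c' * β)). *)
Lemma Proj_fibration : fibration Proj.
Proof.
  split.
  - intros A' B b.
    exists (mkMpOb B (mp_a A') (mp_path A' ⊙ b)).
    exists (@mkMpHom (mkMpOb B (mp_a A') (mp_path A' ⊙ b)) A' (id1 (mp_a A')) b
              ((phi_u F (mp_a A') ⋆ id2 (mp_path A' ⊙ b)) ∘ vinv (lunit (mp_path A' ⊙ b)))).
    reflexivity.
  - intros X Y a' b beta.
    set (a := mkMpHom (mh_a a') b (mh_sq a' ∘ (id2 (mp_path Y) ⋆ beta))).
    exists a, (id2 (mh_a a')).
    assert (E : proj_cell a a' (id2 (mh_a a')) = beta).
    { apply proj_cell_unique. simpl. rewrite (m2_id _ _ _ HF), hcomp2_1, vcomp1l. reflexivity. }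
    exact (f_equal (existT (fun x : hom (mp_c X) (mp_c Y) => cell x (mh_c a')) b) E).
Qed.

Lemma Incl_cofibration : cofibration Incl.
Proof.
  split.
  - intros X Y E. exact (f_equal mp_a E).
  - intros X Y f g E. exact (f_equal (@mh_a (incl_ob X) (incl_ob Y)) E).
Qed.

(* G is a weak equivalence: (Z, X, c) is joined to G X by the 1-cell
   (1, c, phi_X * c), and G is the identity on 2-cells, so that taking the
   A-component is a strict inverse of each G_{X,Y}. *)
Lemma Incl_weak_equivalence : weak_equivalence Incl.
Proof.
  split.
  - intros P. exists (mp_a P). constructor.
    exact (@mkMpHom P (incl_ob (mp_a P)) (id1 (mp_a P)) (mp_path P)
             (phi_u F (mp_a P) ⋆ id2 (mp_path P))).
  - intros X Y.
    exists (fun x => mh_a x), (fun x y c => c), (fun f => id2 f), (fun x => id2 (mh_a x)).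
    simpl. split; [|split; [|split]]; intros; try reflexivity;
      rewrite vcomp1l, vcomp1r; reflexivity.
Qed.

Lemma proj_incl_cell {X Y : ob A} {f g : hom X Y} (a : cell f g) : proj_cell (incl_hom f)
  (incl_hom g) a = m2 F a.
Proof.
  apply proj_cell_unique.
  simpl.
  rewrite lwhisker_id1_conj, rwhisker_id1_conj.
  reassoc.
  cancel_inverses.
  reflexivity.
Qed.

Lemma proj_incl_phi_c {X Y Z : ob A} (g : hom Y Z) (f : hom X Y) :
  proj_cell (mp_comp (incl_hom g) (incl_hom f)) (incl_hom (g ⊙ f)) (id2 (g ⊙ f)) = phi_c F g f.
Proof.
  apply proj_cell_unique. unfold mp_comp. simpl. unfold sq_comp, paste. simpl.
  rewrite (m2_id _ _ _ HF), hcomp2_1, vcomp1l.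
  rewrite lwhisker_id1_conj.
  reassoc.
  cancel_inverses.
  rewrite_chain (runit_inv_natural (phi_c F g f)).
  rewrite !whisker_l_vcomp, !whisker_r_vcomp. reassoc.
  rewrite_chain (lunit_hcomp_inv (m1 F g) (m1 F f)).
  rewrite_chain (triangle_vinv (m1 F g) (m1 F f)).
  rewrite_chain (eq_sym (whisker_l_vcomp (m1 F g) (lunit (m1 F f)) (vinv (lunit (m1 F f))))).
  rewrite vcompVr, hcomp2_1, vcomp1r.
  rewrite_chain (runit_hcomp_inv (m1 F g) (m1 F f)).
  reflexivity.
Qed.

Lemma proj_incl_phi_u (X : ob A) : proj_cell (mp_id (incl_ob X)) (incl_hom (id1 X)) (id2 (id1 X))
  = phi_u F X.
Proof.
  apply proj_cell_unique. unfold mp_id, sq_id. simpl.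
  rewrite (m2_id _ _ _ HF), hcomp2_1, vcomp1l.
  rewrite lwhisker_id1_conj.
  reassoc.
  cancel_inverses.
  rewrite_chain (runit_inv_natural (phi_u F X)).
  rewrite lunit_runit_id1. reflexivity.
Qed.

Lemma proj_vinv {P Q : MpOb} (a a' : MpHom P Q) (x : cell (mh_a a) (mh_a a')) :
  proj_cell a' a (vinv x) = vinv (proj_cell a a' x).
Proof.
  apply vinv_unique_l. rewrite <- proj_vcomp, vcompVl. apply proj_id2.
Qed.

Lemma proj_incl_phi_i {X Y : ob A} (f : hom X Y) :
  proj_cell (mp_inv (incl_hom f)) (incl_hom (inv1 f)) (id2 (inv1 f)) = phi_i F f.
Proof.
  apply (whisker_r_inj (m1 F f)).
  assert (E : @proj_cell (incl_ob X) (incl_ob X) (mp_comp (mp_inv (incl_hom f)) (incl_hom f))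
      (mp_id (incl_ob X)) (ecell f)
    = @proj_cell (incl_ob X) (incl_ob X) (mp_comp (mp_inv (incl_hom f)) (incl_hom f))
        (mp_id (incl_ob X))
        (vinv (id2 (id1 X)) ∘ ecell f ∘ id2 (inv1 f ⊙ f) ∘ (id2 (inv1 f) ⋆ id2 f))).
  { f_equal. rewrite hcomp2_1, !vcomp1r, vinv_id2, vcomp1l. reflexivity. }
  rewrite (proj_vcomp (mp_comp (mp_inv (incl_hom f)) (incl_hom f)) (mp_comp (incl_hom (inv1 f))
      (incl_hom f)) (mp_id (incl_ob X))) in E.
  rewrite (proj_vcomp (mp_comp (incl_hom (inv1 f)) (incl_hom f)) (incl_hom (inv1 f ⊙ f))
      (mp_id (incl_ob X))) in E.
  rewrite (proj_vcomp (incl_hom (inv1 f ⊙ f)) (incl_hom (id1 X)) (mp_id (incl_ob X))) in E.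
  rewrite (proj_hcomp2 (mp_inv (incl_hom f)) (incl_hom (inv1 f)) (incl_hom f) (incl_hom f)),
      (proj_id2 (incl_hom f) : proj_cell (incl_hom f) (incl_hom f) (id2 f) = id2 (m1 F f)),
      proj_incl_phi_c, proj_incl_cell, (proj_vinv (mp_id (incl_ob X)) (incl_hom (id1 X))),
      proj_incl_phi_u in E.
  pose proof (proj_ecell (incl_hom f)) as Ee. simpl in E, Ee. rewrite Ee in E.
  apply (cancel_l (m2 F (ecell f) ∘ phi_c F (inv1 f) f)).
  simpl. rewrite (mor_ecell _ _ _ HF), E. reassoc. cancel_inverses. reflexivity.
Qed.

Lemma Proj_after_Incl : F = mcomp Proj Incl.
Proof.
  apply mordata_ext; intros; simpl.
  - apply proj_incl_cell.
  - rewrite vcomp1r. apply proj_incl_phi_c.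
  - rewrite vcomp1r. apply proj_incl_phi_u.
  - rewrite vcomp1r. apply proj_incl_phi_i.
Qed.

End MappingPath.

Theorem lemma5p13 (A C : Bigroupoid) (F : MorData A C) (HF : IsMorphism F) :
  exists (B : Bigroupoid) (G : MorData A B) (H : MorData B C),
    IsMorphism G /\ IsMorphism H /\
    trivial_cofibration G /\ fibration H /\
    F = mcomp H G.
Proof.
  exists (MapPath F), (Incl F), (Proj F).
  split; [exact (Incl_morphism F)|].
  split; [exact (Proj_morphism F HF)|].
  split; [exact (conj (Incl_cofibration F) (Incl_weak_equivalence F))|].
  split; [exact (Proj_fibration F HF)|].
  exact (Proj_after_Incl F HF).
Qed.
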